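(* The metric space $(\mathfrak S_1(\mathbb T),d)$ is complete.
   Context: A rigged subset $S$ of a set $X$ assigns to each $x$ a multiplicity $\mathrm{mult}(x;S)\in\{0,1,\dots,\infty\}$; an enumeration is a sequence in which each $x$ appears $\mathrm{mult}(x;S)$ times. $\mathfrak S_\infty(\mathbb T)$ consists of countable rigged subsets of the unit circle $\mathbb T$ (arc-length metric) in which $1$ has multiplicity $\infty$ and with no other accumulation point (point every neighbourhood of which contains infinitely many elements counting multiplicity). $d(S,T)=\inf\sum_j\mathrm{dist}(s_j,t_j)$ over all enumerations $(s_j),(t_j)$ of $S,T$, and $\mathfrak S_1(\mathbb T)=\{S\in\mathfrak S_\infty(\mathbb T):d(S,\mathbf 1)<\infty\}$, with $\mathbf 1$ the rigged set consisting of $1$ with infinite multiplicity. *)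

From HB Require Import structures.
From mathcomp Require Import all_boot all_order all_algebra.
From mathcomp Require Import all_classical all_reals all_analysis.
Set Implicit Arguments. Unset Strict Implicit. Unset Printing Implicit Defensive.
Import Order.TTheory GRing.Theory Num.Theory.
Local Open Scope classical_set_scope.
Local Open Scope ring_scope.

(* The unit circle T, parametrized by the angle theta in [0, 2 pi):
   the point e^{i theta}. *)
Definition circ (R : realType) := {t : R | (0 <= t) && (t < 2 * (pi : R))}.

Lemma zero_in_circ (R : realType) : ((0:R) <= 0) && (0 < 2 * (pi : R)).
Proof. by rewrite lexx /= mulr_gt0 // pi_gt0. Qed.

Definition one_c (R : realType) : circ R := exist _ 0 ((@zero_in_circ R)).

Definition cdist (R : realType) (x y : circ R) : R :=
  Num.min `|sval x - sval y| (2 * (pi : R) - `|sval x - sval y|).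

Inductive emult := Fin of nat | Inf.

(* a rigged subset of the circle: its multiplicity function *)
Definition rigged (R : realType) := circ R -> emult.

Definition support (R : realType) (S : rigged R) : set (circ R) :=
  [set x | S x <> Fin 0].

(* A contains infinitely many elements of S counting multiplicity *)
Definition infinite_mass (R : realType) (S : rigged R) (A : set (circ R)) :=
  (exists2 y, A y & S y = Inf) \/ infinite_set (A `&` support S).

Definition accum_point (R : realType) (S : rigged R) (x : circ R) :=
  forall e : R, 0 < e -> infinite_mass S [set y | cdist x y < e].

Definition S_inf (R : realType) (S : rigged R) :=
  [/\ countable (support S), S (@one_c R) = Inf &
      forall x, accum_point S x -> x = @one_c R].

(* enumeration of S (indexed by nat, since S in S_inf is infinite):
   each x appears exactly mult(x;S) times *)
Definition enumeration (R : realType) (S : rigged R) (s : nat -> circ R) :=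
  forall x, match S x return Prop with
            | Fin k => ([set j | s j = x] #= `I_k)%card
            | Inf => infinite_set [set j | s j = x]
            end.

Definition rdist (R : realType) (S T : rigged R) : \bar R :=
  ereal_inf [set v : \bar R | exists s t, [/\ enumeration S s, enumeration T t &
     (v = \sum_(0 <= j <oo) ((cdist (s j) (t j))%:E))%E]].

Definition rone (R : realType) : rigged R :=
  fun x => if pselect (x = @one_c R) then Inf else Fin 0.

Definition S_one (R : realType) (S : rigged R) :=
  S_inf S /\ (rdist S (@rone R) < +oo)%E.

(* Pass to a subsequence with d(u_k, u_(k+1)) < 2^-k.  Enumerations of the same
   rigged set differ by a permutation of the indices, so any enumeration of u_k can
   be matched with an enumeration of u_(k+1) at cost < 2^-k; this gives a chain of
   enumerations whose coordinates are Cauchy on the circle, so they converge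
   coordinatewise to a sequence x at cost <= 2^(1-k) from the k-th enumeration.
   Interleaving x with infinitely many copies of 1 changes no cost and makes 1 of
   infinite multiplicity; the rigged set S it enumerates is the limit.  S lies in
   S_1 because it is at finite distance from 1: the points of S at distance >= c
   from 1 contribute terms >= c to a convergent series, so there are finitely many
   of them, and 1 is the only accumulation point. *)

From Pilot Require Import Defs.
From HB Require Import structures.
From mathcomp Require Import all_boot all_order all_algebra.
From mathcomp Require Import all_classical all_reals all_analysis.
From mathcomp Require Import lra zify.
Import Order.TTheory GRing.Theory Num.Theory.
Local Open Scope classical_set_scope.
Local Open Scope ring_scope.

Section Circle.
Context {R : realType}.
Implicit Types a b c : circ R.

Lemma circ_bnd a : 0 <= sval a < 2 * pi.
Proof. by case: a => t /= /andP[-> ->]. Qed.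

Lemma norm_sub_circ_lt a b : `|sval a - sval b| < 2 * pi.
Proof.
have /andP[? ?] := circ_bnd a; have /andP[? ?] := circ_bnd b.
by rewrite ltr_norml; apply/andP; split; lra.
Qed.

Lemma cdist_ge0 a b : 0 <= cdist a b.
Proof. by rewrite /cdist le_min normr_ge0 subr_ge0 ltW // norm_sub_circ_lt. Qed.

Lemma cdist_le_norm_shift a b d (z : int) :
  sval a - sval b = d - 2 * pi * z%:~R -> cdist a b <= `|d|.
Proof.
move=> E; rewrite /cdist ge_min.
have [z0|z0] := eqVneq z 0; first by rewrite z0 mulr0 subr0 in E; rewrite E lexx.
have z1 : 1 <= `|z%:~R : R| by rewrite -intr_norm ler1z; lia.
have two_pi_le : 2 * pi <= `|2 * pi * z%:~R| :> R.
  by rewrite normrM ger0_norm ?ler_peMr // mulr_ge0 // pi_ge0.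
have : `|2 * pi * z%:~R| <= `|d| + `|sval a - sval b|.
  by rewrite (_ : 2 * pi * z%:~R = d - (sval a - sval b)) ?ler_normB //; lra.
by move=> norm_le; apply/orP; right; lra.
Qed.

Lemma cdist_lift a b : exists (d : R) (z : int),
  `|d| = cdist a b /\ sval a + d = sval b + 2 * pi * z%:~R.
Proof.
have /andP[? ?] := circ_bnd a; have /andP[? ?] := circ_bnd b.
have [h|h] := lerP `|sval a - sval b| (2 * pi - `|sval a - sval b|).
- exists (sval b - sval a), 0; rewrite /cdist (min_l h) mulr0 addr0 distrC.
  by split => //; rewrite addrC subrK.
- rewrite /cdist (min_r (ltW h)).
  have [h1|h1] := lerP 0 (sval a - sval b).
  + exists (2 * pi - (sval a - sval b)), 1; rewrite mulr1 (ger0_norm h1).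
    by rewrite ger0_norm; [split; lra | lra].
  + exists (sval b - sval a - 2 * pi), (-1); rewrite mulrN1 (ltr0_norm h1).
    by rewrite ltr0_norm; [split; lra | lra].
Qed.

Lemma cdistxx a : cdist a a = 0.
Proof.
apply/le_anti; rewrite cdist_ge0 andbT -(normr0 R).
by apply: (@cdist_le_norm_shift _ _ _ 0); rewrite !subrr mulr0 subr0.
Qed.

Lemma cdistC a b : cdist a b = cdist b a.
Proof. by rewrite /cdist distrC. Qed.

Lemma cdist_triangle a b c : cdist a c <= cdist a b + cdist b c.
Proof.
have [d1 [z1 [<- e1]]] := cdist_lift a b.
have [d2 [z2 [<- e2]]] := cdist_lift b c.
apply: le_trans (ler_normD d1 d2); rewrite -normrN.
apply: (@cdist_le_norm_shift _ _ _ (- (z1 + z2))).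
rewrite rmorphN rmorphD /= mulrN; set P := 2 * pi in e1 e2 *; rewrite mulrDr; lra.
Qed.

Lemma cdist_gt0 a b : a <> b -> 0 < cdist a b.
Proof.
move=> ab; have ne : sval a - sval b != 0.
  by rewrite subr_eq0; apply: contra_notN ab => /eqP/eq_sig_hprop; apply.
by rewrite /cdist lt_min normr_gt0 ne subr_gt0 norm_sub_circ_lt.
Qed.

Lemma circ_of_proof (t : R) :
  (0 <= t - 2 * pi * (Num.floor (t / (2 * pi)))%:~R) &&
  (t - 2 * pi * (Num.floor (t / (2 * pi)))%:~R < 2 * pi).
Proof.
have tp : (0 : R) < 2 * pi by rewrite mulr_gt0 // pi_gt0.
have h1 := floor_le (t / (2 * pi)); have h2 := floorD1_gt (t / (2 * pi)).
rewrite rmorphD /= in h2.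
have {1 3}-> : t = 2 * pi * (t / (2 * pi)) by rewrite mulrC divfK // gt_eqF.
rewrite -mulrBr pmulr_rge0 // subr_ge0 h1 /= -[X in _ < X]mulr1 ltr_pM2l //.
by rewrite ltrBlDr addrC.
Qed.

Definition circ_of (t : R) : circ R :=
  exist (fun x : R => (0 <= x) && (x < 2 * pi)) _ (circ_of_proof t).

Lemma circ_ofE t : sval (circ_of t) = t - 2 * pi * (Num.floor (t / (2 * pi)))%:~R.
Proof. by []. Qed.

End Circle.

Section Fibers.
Context {T : Type}.
Local Open Scope card_scope.
Implicit Types s t : nat -> T.

Definition fiber s x := [set j | s j = x].

Definition has_mult (m : emult) (F : set nat) : Prop :=
  match m with Fin k => F #= `I_k | Inf => infinite_set F end.

Lemma infinite_nat_card_eq {A : set nat} : infinite_set A -> A #= [set: nat].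
Proof. by rewrite card_eq_le => /infiniteP ->; rewrite subset_card_le. Qed.

Lemma has_mult_card_eq {m} {A B : set nat} : A #= B -> has_mult m A -> has_mult m B.
Proof.
case: m => [k|] /= AB; first by move=> Ak; apply: card_eq_trans (card_esym AB) Ak.
by move=> + [n Bn] => /(_ (ex_intro _ n (card_eq_trans AB Bn))).
Qed.

Lemma has_mult_card_eq2 {m} {A B : set nat} : has_mult m A -> has_mult m B -> A #= B.
Proof.
case: m => [k|] /= hA hB; first exact: card_eq_trans hA (card_esym hB).
exact: card_eq_trans (infinite_nat_card_eq hA) (card_esym (infinite_nat_card_eq hB)).
Qed.

(* Glue together bijections between corresponding fibers. *)
Lemma fiber_card_eq_bij s t : (forall x, fiber s x #= fiber t x) ->
  exists2 sig : nat -> nat, set_bij setT setT sig & forall j, t (sig j) = s j.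
Proof.
move=> st; have /choice[F hF] x : exists f, set_bij (fiber s x) (fiber t x) f.
  exact/card_set_bijP.
have tF j : t (F (s j) j) = s j by have [+ _ _] := hF (s j); apply.
exists (fun j => F (s j) j) => //; split => //.
- move=> i j _ _ /= Fij; have sji : s j = s i by rewrite -tF -Fij tF.
  have [_ inj _] := hF (s i); rewrite sji in Fij.
  by apply: inj; rewrite // inE.
- move=> i _; have [_ _ /(_ i erefl)[j sj Fj]] := hF (t i).
  by exists j => //=; rewrite sj.
Qed.

Lemma fiber_comp_bij s sig x : set_bij setT setT sig -> fiber (s \o sig) x #= fiber s x.
Proof.
move=> [_ inj sur]; apply/card_set_bijP; exists sig; split => //.
- by move=> i j _ _; apply: inj; rewrite inE.
- by move=> i si; have [j _ ji] := sur i I; exists j; rewrite /fiber /= ?ji.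
Qed.

End Fibers.

Section Enumerations.
Context {R : realType}.
Implicit Types (S : rigged R) (s t : nat -> circ R).

Lemma enumerationP S s : enumeration S s <-> forall x, has_mult (S x) (fiber s x).
Proof. by []. Qed.

Lemma enumeration_bij {S s t} : enumeration S s -> enumeration S t ->
  exists2 sig : nat -> nat, set_bij setT setT sig & forall j, t (sig j) = s j.
Proof.
move=> /enumerationP hs /enumerationP ht; apply: fiber_card_eq_bij => x.
exact: has_mult_card_eq2 (hs x) (ht x).
Qed.

Lemma enumeration_comp_bij {S s sig} : set_bij setT setT sig ->
  enumeration S s -> enumeration S (s \o sig).
Proof.
move=> hsig /enumerationP hs; apply/enumerationP => x.
exact: has_mult_card_eq (card_esym (fiber_comp_bij _ _ x hsig)) (hs x).
Qed.

Lemma enumeration_fiber_nonempty {S s x} : enumeration S s -> S x <> Fin 0 ->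
  exists j, s j = x.
Proof.
move=> /enumerationP /(_ x) hx Sx; apply: contrapT => /forallNP no_j.
have f0 : fiber s x = set0 by apply/seteqP; split => // j /no_j.
move: hx; rewrite f0; case: (S x) Sx => [[|k]|] //= _.
by rewrite card_eq_sym card_eq0 => /eqP /(congr1 (@^~ 0%N)) /= <-.
Qed.

End Enumerations.

Section Distance.
Context {R : realType}.
Local Open Scope ereal_scope.
Implicit Types (A B C : rigged R) (s t r : nat -> circ R).

Definition cost s t := \sum_(0 <= j <oo) (cdist (s j) (t j))%:E.

Lemma cost_ge0 s t : 0 <= cost s t.
Proof. by apply: nneseries_ge0 => n _ _; rewrite lee_fin cdist_ge0. Qed.

Lemma costC s t : cost s t = cost t s.
Proof. by apply: eq_eseriesr => j _; rewrite cdistC. Qed.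

Lemma cost_triangle s t r : cost s r <= cost s t + cost t r.
Proof.
have cdist_ge0E (a b : nat -> circ R) i : 0 <= (cdist (a i) (b i))%:E.
  by rewrite lee_fin cdist_ge0.
rewrite /cost -nneseriesD //; apply: lee_nneseries => // n _.
by rewrite -EFinD lee_fin cdist_triangle.
Qed.

Lemma cost_comp_bij s t sig : set_bij setT setT sig ->
  cost (s \o sig) (t \o sig) = cost s t.
Proof.
move=> hsig; have ge0 j : 0 <= (cdist (s j) (t j))%:E by rewrite lee_fin cdist_ge0.
rewrite /cost (nneseries_esumT (fun j => ge0 (sig j))) (nneseries_esumT ge0).
exact/esym/(@reindex_esum R _ _ setT setT sig (fun j => (cdist (s j) (t j))%:E)).
Qed.

Lemma rdist_le_cost {A B s t} : enumeration A s -> enumeration B t -> rdist A B <= cost s t.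
Proof. by move=> hs ht; apply: ereal_inf_lbound; exists s, t. Qed.

Lemma rdist_ge0 A B : 0 <= rdist A B.
Proof. by apply: le_ereal_inf_tmp => _ [s [t [_ _ ->]]]; exact: cost_ge0. Qed.

Lemma rdistC A B : rdist A B = rdist B A.
Proof.
by congr ereal_inf; apply/seteqP; split => _ [s [t [hs ht ->]]];
  exists t, s; split => //; exact: costC.
Qed.

(* Permute a near-optimal pair of enumerations so that its first component
   becomes [s]. *)
Lemma rdist_lt_cost {A B s x} : enumeration A s -> rdist A B < x ->
  exists2 t, enumeration B t & cost s t < x.
Proof.
move=> hs /ereal_inf_lt[_ [s' [t [hs' ht ->]]]] lt_x.
have [sig hsig s's] := enumeration_bij hs hs'.
exists (t \o sig); first exact: enumeration_comp_bij.
have -> : s = s' \o sig by apply/funext => j /=; rewrite s's.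
by rewrite cost_comp_bij.
Qed.

Lemma rdist_triangle A B C : rdist A C <= rdist A B + rdist B C.
Proof.
apply/lee_addgt0Pr => e e0.
have [|] := boolP (rdist A B + rdist B C \is a fin_num); last first.
  rewrite ge0_fin_numE ?adde_ge0 ?rdist_ge0 // -leNgt leye_eq => /eqP ->.
  by rewrite addye ?leey.
rewrite fin_numD => /andP[fAB fBC].
have e2 : (0 < e / 2)%R by rewrite divr_gt0.
have /ereal_inf_lt[_ [s [t [hs ht ->]]] st] : rdist A B < rdist A B + (e / 2)%:E.
  by rewrite lteDl ?lte_fin.
have BC : rdist B C < rdist B C + (e / 2)%:E by rewrite lteDl ?lte_fin.
have [r hr tr] := rdist_lt_cost ht BC.
apply: le_trans (rdist_le_cost hs hr) _; apply: le_trans (cost_triangle s t r) _.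
by rewrite [e in e%:E]splitr EFinD addeACA leeD // ltW.
Qed.

End Distance.

Section Padding.
Context {R : realType}.
Implicit Types (A : rigged R) (s t : nat -> circ R).
Local Notation one := (@one_c R).
Local Open Scope card_scope.

Definition pad_one s j := if odd j then one else s j./2.

Lemma infinite_odd : infinite_set [set j : nat | odd j].
Proof.
have odd_img : (fun j => j.*2.+1) @` [set: nat] #= [set: nat].
  by apply: inj_card_eq => i j _ _ [] /double_inj.
apply/infiniteP/(card_le_trans (_ : _ #<= (fun j => j.*2.+1) @` [set: nat])).
  by move: odd_img; rewrite card_eq_sym card_eq_le => /andP[].
by apply: subset_card_le => _ [j _ <-] /=; rewrite odd_double.
Qed.

Lemma infinite_fiber_pad_one s : infinite_set (fiber (pad_one s) one).
Proof.
by apply: sub_infinite_set infinite_odd => j oj; rewrite /fiber /pad_one /= oj.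
Qed.

Lemma enumeration_pad_one {A s} : A one = Inf -> enumeration A s ->
  enumeration A (pad_one s).
Proof.
move=> A1 /enumerationP hs; apply/enumerationP => x.
have [->|x1] := pselect (x = one); first by rewrite A1; exact: infinite_fiber_pad_one.
apply: has_mult_card_eq (hs x); apply/card_set_bijP; exists double; split.
- by move=> j /= sj; rewrite /fiber /pad_one /= odd_double doubleK.
- by move=> i j _ _ /double_inj.
- move=> i; rewrite /fiber /pad_one /=; case: ifP => [_ /esym//|oi si].
  by exists i./2 => //; rewrite -[in RHS](odd_double_half i) oi.
Qed.

Lemma cost_pad_one s t : cost (pad_one s) (pad_one t) = cost s t.
Proof.
have ge0 j : (0 <= (cdist (s j./2) (t j./2))%:E)%E by rewrite lee_fin cdist_ge0.
rewrite /cost; transitivity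
  (\sum_(0 <= j <oo | ~~ odd j) (cdist (s j./2) (t j./2))%:E)%E.
  rewrite [RHS]eseries_mkcond; apply: eq_eseriesr => j _.
  by rewrite /pad_one; case: odd; rewrite //= cdistxx.
rewrite nneseries_esum // nneseries_esumT => [|j]; last by rewrite lee_fin cdist_ge0.
rewrite (@reindex_esum R _ _ setT [set j | ~~ odd j] double); last split.
- by apply: eq_esum => j _ /=; rewrite doubleK.
- by move=> j _ /=; rewrite odd_double.
- by move=> i j _ _ /double_inj.
- by move=> i /= oi; exists i./2 => //; rewrite -[in RHS](odd_double_half i) (negbTE oi).
Qed.

End Padding.

Section MultiplicityOf.
Context {R : realType}.

Definition mult_of (s : nat -> circ R) : rigged R := fun x =>
  if pselect (finite_set (fiber s x)) is left fin then Fin (sval (cid fin)) else Inf.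

Lemma enumeration_mult_of s : enumeration (mult_of s) s.
Proof.
apply/enumerationP => x; rewrite /mult_of; case: pselect => [fin|//].
exact: (svalP (cid fin)).
Qed.

Lemma mult_of_infinite s x : infinite_set (fiber s x) -> mult_of s x = Inf.
Proof. by rewrite /mult_of; case: pselect. Qed.

End MultiplicityOf.

Section SOneCriterion.
Context {R : realType}.
Local Notation one := (@one_c R).

Lemma nneseries_finite_ge (f : nat -> R) c : (forall j, 0 <= f j) ->
  (\sum_(0 <= j <oo) (f j)%:E < +oo)%E -> 0 < c -> finite_set [set j | c <= f j].
Proof.
move=> f0 fin c0.
have fin_sum : (\sum_(0 <= j <oo) (f j)%:E)%E \is a fin_num.
  by rewrite ge0_fin_numE // nneseries_ge0 // => j _ _; rewrite lee_fin.
have f_cvg0 : f @ \oo --> 0.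
  apply: cvg_series_cvg_0; apply: nondecreasing_is_cvgn.
    by apply: nondecreasing_series => j _ _; exact: f0.
  exists (fine (\sum_(0 <= j <oo) (f j)%:E)%E) => _ [n _ <-].
  rewrite -lee_fin fineK // /series /= -sumEFin.
  by apply: nneseries_lim_ge => j _ _; rewrite lee_fin.
have [N _ f_lt] := @cvgr_lt _ _ _ _ _ _ f_cvg0 _ c0.
apply: sub_finite_set (finite_II N) => j /= cj; rewrite ltnNge.
by apply/negP => /f_lt; rewrite ltNge cj.
Qed.

Lemma enumeration_rone r : enumeration (@rone R) r -> r = fun=> one.
Proof.
move=> /enumerationP hr; apply/funext => j; apply: contrapT => rj.
have := hr (r j); rewrite /rone; case: pselect => //= _.
by rewrite II0 card_eq0 => /eqP/(congr1 (@^~ j)) /= <-.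
Qed.

Lemma S_one_of_rdist_rone (S : rigged R) :
  S one = Inf -> (rdist S (@rone R) < +oo)%E -> S_one S.
Proof.
move=> S1 fin_rone.
have /ereal_inf_lt[_ [y [r [hy /enumeration_rone -> ->]]] fin] := fin_rone.
have far_finite c : 0 < c -> finite_set [set j | c <= cdist (y j) one].
  by apply: nneseries_finite_ge fin => j; exact: cdist_ge0.
have supp_y : Defs.support S `<=` range y.
  by move=> x /enumeration_fiber_nonempty-/(_ _ hy)[j <-]; exists j.
split => //; split => //.
  apply: sub_countable (countableP [set: nat]).
  exact: card_le_trans (subset_card_le supp_y) (card_image_le y setT).
move=> x x_acc; apply: contrapT => x1.
have d0 : 0 < cdist x one / 2 by rewrite divr_gt0 // cdist_gt0.
have far w : cdist x w < cdist x one / 2 -> cdist x one / 2 <= cdist w one.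
  by move=> xw; have := cdist_triangle x w one; lra.
have [[w xw Sw]|] := x_acc _ d0.
  move/enumerationP: hy => /(_ w); rewrite Sw /=; apply.
  by apply: sub_finite_set (far_finite _ d0) => j /= ->; exact: far.
apply; apply: sub_finite_set (finite_image y (far_finite _ d0)) => z [xz /supp_y[j _ yj]].
by exists j; rewrite //= yj far.
Qed.

End SOneCriterion.

Section Geometric.
Context {R : realType}.

Definition geo (k : nat) : R := (2 ^+ k)^-1.

Lemma geo_gt0 k : 0 < geo k.
Proof. by rewrite invr_gt0 exprn_gt0. Qed.

Lemma geoS k : 2 * geo k.+1 = geo k.
Proof. by rewrite /geo exprS invfM mulrA divff ?mul1r // pnatr_eq0. Qed.

Lemma geo_le_addl k n : geo (k + n) <= geo n.
Proof. by rewrite lef_pV2 ?posrE ?exprn_gt0 // ler_eXn2l ?ltr1n ?leq_addl. Qed.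

Lemma geo_lt {eps : R} : 0 < eps -> exists k, geo k < eps.
Proof.
move=> e0; pose n := Num.bound eps^-1; exists n.
rewrite /geo -[eps]invrK ltf_pV2 ?posrE ?invr_gt0 ?exprn_gt0 //.
apply: lt_trans (archi_boundP _) _; first by rewrite invr_ge0 ltW.
by rewrite -/n -natrX ltr_nat; apply: ltn_expl.
Qed.

Lemma geo_telescope (L : nat -> R) : (forall k, `|L k.+1 - L k| <= geo k) ->
  forall k n, `|L (k + n)%N - L k| <= 2 * geo k - 2 * geo (k + n).
Proof.
move=> hL k; elim=> [|n IH]; first by rewrite addn0 subrr normr0 subrr.
rewrite addnS; apply: le_trans (ler_distD (L (k + n)%N) _ _) _.
by have := hL (k + n)%N; have := geoS (k + n); lra.
Qed.

(* The limit is the infimum of the upper bounds [L k + 2 geo k], which decrease. *)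
Lemma geo_cauchy_lim (L : nat -> R) : (forall k, `|L k.+1 - L k| <= geo k) ->
  exists l, forall k, `|L k - l| <= 2 * geo k.
Proof.
move=> /geo_telescope tele; pose U := range (fun k => L k + 2 * geo k).
have U_lb m : lbound U (L m - 2 * geo m).
  move=> _ [k _ <-]; have := geo_gt0 k; have := geo_gt0 m.
  have [mk|km] := leqP m k.
    by have := tele m (k - m)%N; rewrite subnKC // ler_norml; lra.
  by have := tele k (m - k)%N; rewrite subnKC 1?ltnW // ler_norml; lra.
exists (inf U) => m; rewrite ler_norml; apply/andP; split.
  suff : inf U <= L m + 2 * geo m by lra.
  by apply: ge_inf; [exists (L 0%N - 2 * geo 0); exact: U_lb | exists m].
suff : L m - 2 * geo m <= inf U by lra.
by apply: lb_le_inf; [exists (L 0%N + 2 * geo 0), 0%N | exact: U_lb].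
Qed.

Lemma circ_cauchy_lim (a : nat -> circ R) : (forall k, cdist (a k) (a k.+1) <= geo k) ->
  exists y, forall k, cdist (a k) y <= 2 * geo k.
Proof.
move=> ha.
have /choice[d hd] k : exists d : R, `|d| = cdist (a k) (a k.+1) /\
    exists z : int, sval (a k) + d = sval (a k.+1) + 2 * pi * z%:~R.
  by have [d [z [? ?]]] := cdist_lift (a k) (a k.+1); exists d; split; last exists z.
(* a real lift of [a], moving by the shortest displacement at each step *)
pose L k := sval (a 0%N) + \sum_(i < k) d i.
have LS k : L k.+1 = L k + d k by rewrite /L big_ord_recr addrA.
have L_lift k : exists z : int, L k = sval (a k) + 2 * pi * z%:~R.
  elim: k => [|k [z Lk]]; first by exists 0; rewrite /L big_ord0 mulr0 !addr0.
  have [_ [z' hz']] := hd k; exists (z + z'); rewrite LS Lk rmorphD /=.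
  set P := 2 * pi in hz' *; rewrite mulrDr; lra.
have [l hl] : exists l, forall k, `|L k - l| <= 2 * geo k.
  by apply: geo_cauchy_lim => k; rewrite LS addrC addKr (proj1 (hd k)).
exists (circ_of l) => k; apply: le_trans (hl k); have [z Lk] := L_lift k.
apply: (@cdist_le_norm_shift _ _ _ _ (z - Num.floor (l / (2 * pi)))).
rewrite circ_ofE rmorphB /=; set P := 2 * pi in Lk *; rewrite mulrBr; lra.
Qed.

End Geometric.

Section GeometricLimit.
Context {R : realType}.
Local Open Scope ereal_scope.
Implicit Types s t : nat -> circ R.

Lemma sum_cdist_le_cost s t J : (\sum_(j < J) cdist (s j) (t j))%:E <= cost s t.
Proof.
rewrite -sumEFin -(big_mkord xpredT (fun j => (cdist (s j) (t j))%:E)).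
by apply: nneseries_lim_ge => j _ _; rewrite lee_fin cdist_ge0.
Qed.

Lemma cost_le_sum_bound s t (c : R) :
  (forall J, (\sum_(j < J) cdist (s j) (t j) <= c)%R) -> cost s t <= c%:E.
Proof.
move=> hc; apply: lime_le.
  by apply: is_cvg_nneseries => j _ _; rewrite lee_fin cdist_ge0.
by apply: nearW => J; rewrite sumEFin lee_fin big_mkord.
Qed.

Variable e : nat -> nat -> circ R.
Hypothesis e_step : forall k, cost (e k) (e k.+1) < (geo k)%:E.

Lemma sum_cdist_step k J : (\sum_(j < J) cdist (e k j) (e k.+1 j) <= geo k)%R.
Proof. by rewrite -lee_fin (le_trans (sum_cdist_le_cost _ _ J)) // ltW. Qed.

Lemma cdist_step k j : (cdist (e k j) (e k.+1 j) <= geo k)%R.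
Proof.
apply: le_trans (sum_cdist_step k j.+1); rewrite big_ord_recr /= lerDr.
by apply: sumr_ge0 => i _; exact: cdist_ge0.
Qed.

Lemma sum_cdist_chain k n J :
  (\sum_(j < J) cdist (e k j) (e (k + n)%N j) <= 2 * geo k - 2 * geo (k + n))%R.
Proof.
elim: n => [|n IH]; first by rewrite addn0 subrr big1 // => j _; exact: cdistxx.
rewrite addnS; apply: le_trans (_ : _ <= \sum_(j < J)
  (cdist (e k j) (e (k + n)%N j) + cdist (e (k + n)%N j) (e (k + n).+1 j)))%R _.
  by apply: ler_sum => j _; exact: cdist_triangle.
rewrite big_split /=; have := sum_cdist_step (k + n) J.
by have := @geoS R (k + n); lra.
Qed.

Lemma cost_geo_lim : exists x, forall k, cost (e k) x <= (2 * geo k)%:E.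
Proof.
have /choice[x hx] j : exists y, forall k, (cdist (e k j) y <= 2 * geo k)%R.
  by apply: circ_cauchy_lim => k; exact: cdist_step.
exists x => k; apply: cost_le_sum_bound => J; apply/ler_addgt0Pr => eps eps0.
have J0 : (0 < 2 * J%:R + 1 :> R)%R by rewrite ltr_wpDl // mulr_ge0.
have [n] := geo_lt (divr_gt0 eps0 J0); rewrite ltr_pdivlMr // => geo_n.
have close : (\sum_(j < J) cdist (e (k + n)%N j) (x j) <= 2 * geo (k + n) * J%:R)%R.
  apply: le_trans (_ : _ <= \sum_(j < J) 2 * geo (k + n))%R _.
    by apply: ler_sum => j _; exact: hx.
  by rewrite sumr_const card_ord mulr_natr.
have geo_kn : (geo (k + n) * J%:R <= geo n * J%:R)%R :=
  ler_wpM2r (ler0n _ _) (@geo_le_addl R k n).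
apply: le_trans (_ : _ <= \sum_(j < J)
  (cdist (e k j) (e (k + n)%N j) + cdist (e (k + n)%N j) (x j)))%R _.
  by apply: ler_sum => j _; exact: cdist_triangle.
rewrite big_split /=; have := sum_cdist_chain k n J; have := @geo_gt0 R (k + n).
have := @geo_gt0 R n; lra.
Qed.

End GeometricLimit.

Section Completeness.
Context {R : realType}.
Local Open Scope ereal_scope.
Local Notation one := (@one_c R).

Lemma cauchy_geo_subseq {d : nat -> nat -> \bar R} :
  (forall eps : R, (0 < eps)%R ->
     exists N, forall m n, (N <= m)%N -> (N <= n)%N -> d m n < eps%:E) ->
  exists2 phi : nat -> nat, (forall k, phi k <= phi k.+1)%N &
    forall k m n, (phi k <= m)%N -> (phi k <= n)%N -> d m n < (geo k)%:E.
Proof.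
move=> d_cauchy; have /choice[N hN] k := d_cauchy _ (@geo_gt0 R k).
exists (fun k => \sum_(i < k.+1) N i)%N => [k|k m n km kn].
  by rewrite [leqRHS]big_ord_recr leq_addr.
have Nphi : (N k <= \sum_(i < k.+1) N i)%N by rewrite big_ord_recr leq_addl.
by apply: hN; [exact: leq_trans km | exact: leq_trans kn].
Qed.

Lemma enumeration_chain {A : nat -> rigged R} {b : nat -> \bar R} {s0} :
  enumeration (A 0%N) s0 -> (forall k, rdist (A k) (A k.+1) < b k) ->
  exists2 e : nat -> nat -> circ R, forall k, enumeration (A k) (e k) &
    forall k, cost (e k) (e k.+1) < b k.
Proof.
move=> hs0 hA.
have /choice[F hF] (ks : nat * (nat -> circ R)) : exists t,
    enumeration (A ks.1) ks.2 -> enumeration (A ks.1.+1) t /\ cost ks.2 t < b ks.1.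
  case: ks => k s /=; have [hs|] := pselect (enumeration (A k) s); last by exists s.
  by have [t ht st] := rdist_lt_cost hs (hA k); exists t.
pose e := fix e k := if k is k'.+1 then F (k', e k') else s0.
have he k : enumeration (A k) (e k).
  by elim: k => [|k IH] //; exact: (hF (k, e k) IH).1.
by exists e => // k; exact: (hF (k, e k) (he k)).2.
Qed.

(* The limit enumerates the coordinatewise limit of a chain of enumerations,
   padded with infinitely many copies of [one] to keep its multiplicity infinite. *)
Lemma geo_cauchy_limit (A : nat -> rigged R) :
  (forall k, A k one = Inf) -> rdist (A 0%N) (@rone R) < +oo ->
  (forall k, rdist (A k) (A k.+1) < (geo k)%:E) ->
  exists2 S, S_one S & forall k, rdist (A k) S <= (2 * geo k)%:E.
Proof.
move=> A1 A0 hA; have /ereal_inf_lt[_ [s0 [_ [hs0 _ _]]] _] := A0.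
have [e he e_step] := enumeration_chain hs0 hA.
have [x hx] := cost_geo_lim _ e_step.
have hS := enumeration_mult_of (pad_one x).
have dist_S k : rdist (A k) (mult_of (pad_one x)) <= (2 * geo k)%:E.
  rewrite (le_trans (rdist_le_cost (enumeration_pad_one (A1 k) (he k)) hS)) //.
  by rewrite cost_pad_one.
exists (mult_of (pad_one x)) => //.
apply: S_one_of_rdist_rone; first exact/mult_of_infinite/infinite_fiber_pad_one.
apply: le_lt_trans (rdist_triangle _ (A 0%N) _) _; rewrite rdistC lte_add_pinfty //.
by apply: le_lt_trans (dist_S 0%N) _; rewrite ltey.
Qed.

End Completeness.

Theorem mainTheorem7 (R : realType) (u : nat -> rigged R) :
  (forall n, S_one (u n)) ->
  (forall e : R, 0 < e -> exists N : nat, forall m n : nat,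
      (N <= m)%N -> (N <= n)%N -> (rdist (u m) (u n) < e%:E)%E) ->
  exists S : rigged R, S_one S /\
    (forall e : R, 0 < e -> exists N : nat, forall n : nat,
      (N <= n)%N -> (rdist (u n) S < e%:E)%E).
Proof.
move=> u_S1 u_cauchy; have [phi phiS hphi] := cauchy_geo_subseq u_cauchy.
have [S S1 dist_S] : exists2 S, S_one S & forall k,
    (rdist (u (phi k)) S <= (2 * geo k)%:E)%E.
  apply: geo_cauchy_limit => [k||k]; first by case: (u_S1 (phi k)) => -[].
    exact: (u_S1 _).2.
  by apply: hphi => //; exact: phiS.
exists S; split => // eps eps0.
have eps3 : 0 < eps / 3 by rewrite divr_gt0.
have [k] := geo_lt eps3; rewrite ltr_pdivlMr // => geo_k.
exists (phi k) => n kn; apply: le_lt_trans (rdist_triangle _ (u (phi k)) _) _.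
have fin : rdist (u (phi k)) S \is a fin_num.
  by rewrite ge0_fin_numE ?rdist_ge0 // (le_lt_trans (dist_S k)) ?ltey.
apply: lt_le_trans (lte_leD fin (hphi k n (phi k) kn (leqnn _)) (dist_S k)) _.
by rewrite -EFinD lee_fin; lra.
Qed.
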